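(* Let $S$ be a Clifford semigroup which is a strong semilattice of groups $\{G_y: y\in Y\}$ over a finite semilattice $Y$. If $S$ is left fairly amenable, then at least one of the groups $G_y$ is amenable.
   Context: A strong semilattice of groups over a semilattice $Y$ is the disjoint union $S=\bigcup_{y\in Y}G_y$ of groups, together with group homomorphisms $\phi_{y,z}:G_y\to G_z$ for $y\ge z$ (with $\phi_{y,y}$ the identity and $\phi_{z,w}\phi_{y,z}=\phi_{y,w}$), and product $ab=\phi_{y,y\wedge z}(a)\phi_{z,y\wedge z}(b)$ for $a\in G_y$, $b\in G_z$. $s$ acts injectively on the left of $A\subseteq S$ if $a\mapsto sa$ is injective on $A$. $S$ is left fairly amenable if there is $\mu:\mathcal P(S)\to[0,1]$, $\mu(S)=1$, additive on disjoint sets, with $\mu(sA)=\mu(A)$ whenever $s$ acts injectively on the left of $A$. A group $G$ is amenable if it admits a finitely-additive probability measure with $\mu(gA)=\mu(A)$ for all $g\in G$, $A\subseteq G$. *)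

From Stdlib Require Import Reals List.
Open Scope R_scope.
Set Implicit Arguments.

Record Group := {
  gcar :> Type;
  gmul : gcar -> gcar -> gcar;
  ginv : gcar -> gcar;
  gone : gcar;
  gmul_assoc : forall a b c, gmul a (gmul b c) = gmul (gmul a b) c;
  gmul_1l : forall a, gmul gone a = a;
  gmul_1r : forall a, gmul a gone = a;
  gmul_Vl : forall a, gmul (ginv a) a = gone;
  gmul_Vr : forall a, gmul a (ginv a) = gone
}.

Record Semilattice := {
  ycar :> Type;
  meet : ycar -> ycar -> ycar;
  meet_assoc : forall x y z, meet x (meet y z) = meet (meet x y) z;
  meet_comm : forall x y, meet x y = meet y x;
  meet_idem : forall x, meet x x = x
}.

Definition sl_le (Y : Semilattice) (z y : Y) : Prop := meet Y y z = z.

Definition finite_type (T : Type) : Prop := exists l : list T, forall x : T, In x l.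

(* phi y z : G_y -> G_z; only its values for z <= y are meaningful. *)
Record StrongSemilattice (Y : Semilattice) := {
  grp : Y -> Group;
  phi : forall y z : Y, grp y -> grp z;
  phi_id : forall y (a : grp y), phi y y a = a;
  phi_comp : forall (y z w : Y) (a : grp y), @sl_le Y z y -> @sl_le Y w z ->
      phi z w (phi y z a) = phi y w a;
  phi_hom : forall (y z : Y) (a b : grp y), @sl_le Y z y ->
      phi y z (gmul (grp y) a b) = gmul (grp z) (phi y z a) (phi y z b)
}.

(* The Clifford semigroup S = disjoint union of the G_y *)
Definition ss_car (Y : Semilattice) (S : StrongSemilattice Y) : Type :=
  { y : Y & grp S y }.

Definition ss_mul (Y : Semilattice) (S : StrongSemilattice Y)
  (s t : ss_car S) : ss_car S :=
  let y := projT1 s in let z := projT1 t in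
  existT _ (meet Y y z)
    (gmul (grp S (meet Y y z)) (phi S y (meet Y y z) (projT2 s))
                               (phi S z (meet Y y z) (projT2 t))).

Definition disjoint (T : Type) (A B : T -> Prop) : Prop := forall x, ~ (A x /\ B x).
Definition setU (T : Type) (A B : T -> Prop) : T -> Prop := fun x => A x \/ B x.
Definition setT (T : Type) : T -> Prop := fun _ => True.

Definition fa_prob (T : Type) (mu : (T -> Prop) -> R) : Prop :=
  (forall A, 0 <= mu A <= 1) /\
  mu (@setT T) = 1 /\
  (forall A B, disjoint A B -> mu (setU A B) = mu A + mu B).

Definition ltrans (T : Type) (mul : T -> T -> T) (s : T) (A : T -> Prop) : T -> Prop :=
  fun x => exists a, A a /\ x = mul s a.

Definition acts_inj_left (T : Type) (mul : T -> T -> T) (s : T) (A : T -> Prop) : Prop :=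
  forall a b, A a -> A b -> mul s a = mul s b -> a = b.

Definition amenable (G : Group) : Prop :=
  exists mu : (G -> Prop) -> R, fa_prob mu /\
    forall (g : G) (A : G -> Prop), mu (ltrans (gmul G) g A) = mu A.

Definition left_fairly_amenable (Y : Semilattice) (S : StrongSemilattice Y) : Prop :=
  exists mu : (ss_car S -> Prop) -> R, fa_prob mu /\
    forall (s : ss_car S) (A : ss_car S -> Prop),
      acts_inj_left (@ss_mul Y S) s A -> mu (ltrans (@ss_mul Y S) s A) = mu A.

From Stdlib Require Import Reals List Lra Classical FunctionalExtensionality
  PropExtensionality Eqdep.

(* Let mu witness the left fair amenability of S.  The groups
   G_y partition S and there are finitely many of them, so by finite
   subadditivity some G_y has positive measure.  Restricting mu to G_y and
   normalising gives a finitely additive probability measure on G_y.  Inside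
   G_y the semigroup product is the group product, and every g in G_y acts
   injectively on G_y by left cancellation, so the invariance of mu under
   injective left translations yields left invariance of the restriction:
   G_y is amenable. *)

Lemma set_ext (T : Type) (A B : T -> Prop) : (forall x, A x <-> B x) -> A = B.
Proof.
  intro H; apply functional_extensionality; intro x.
  apply propositional_extensionality; auto.
Qed.

Section FinitelyAdditiveProbability.

Variables (T : Type) (mu : (T -> Prop) -> R).
Hypothesis Hmu : fa_prob mu.

Lemma fa_prob_ge0 (A : T -> Prop) : 0 <= mu A.
Proof. apply (proj1 Hmu). Qed.

(* The empty set is disjoint from itself, so additivity forces measure 0. *)
Lemma fa_prob_empty : mu (fun _ => False) = 0.
Proof.
  destruct Hmu as [_ [_ Hadd]].
  assert (Hd : disjoint (fun _ : T => False) (fun _ => False)) by (intros x [[] _]).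
  pose proof (Hadd _ _ Hd) as E.
  replace (setU (fun _ : T => False) (fun _ => False)) with (fun _ : T => False) in E
    by (apply set_ext; unfold setU; tauto).
  lra.
Qed.

(* B splits into the disjoint pieces A and B \ A. *)
Lemma fa_prob_mono (A B : T -> Prop) : (forall x, A x -> B x) -> mu A <= mu B.
Proof.
  intro HAB.
  destruct Hmu as [_ [_ Hadd]].
  replace B with (setU A (fun x => B x /\ ~ A x)).
  - rewrite Hadd by (intros x [Ha [_ Hna]]; auto).
    pose proof (fa_prob_ge0 (fun x => B x /\ ~ A x)); lra.
  - apply set_ext; intro x; unfold setU.
    destruct (classic (A x)); intuition.
Qed.

Lemma fa_prob_subadd (A B : T -> Prop) : mu (setU A B) <= mu A + mu B.
Proof.
  destruct Hmu as [_ [_ Hadd]].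
  replace (setU A B) with (setU A (fun x => B x /\ ~ A x)).
  - rewrite Hadd by (intros x [Ha [_ Hna]]; auto).
    pose proof (fa_prob_mono (fun x => B x /\ ~ A x) B (fun x H => proj1 H)); lra.
  - apply set_ext; intro x; unfold setU.
    destruct (classic (A x)); intuition.
Qed.

(* A partition of T into finitely many fibres has a fibre of positive
   measure: otherwise, by subadditivity, T itself would be null. *)
Lemma fa_prob_fiber_pos (I : Type) (f : T -> I) :
  finite_type I -> exists i, 0 < mu (fun x => f x = i).
Proof.
  intros [l Hl].
  apply NNPP; intro Hnone.
  assert (Hnull : forall i, mu (fun x => f x = i) <= 0)
    by (intro i; apply Rnot_lt_le; intro Hpos; eauto).
  assert (Hcover : forall l', mu (fun x => In (f x) l') <= 0).
  { induction l' as [|i l' IH].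
    - rewrite <- fa_prob_empty; apply fa_prob_mono; simpl; tauto.
    - apply Rle_trans with (mu (setU (fun x => f x = i) (fun x => In (f x) l'))).
      + apply fa_prob_mono; unfold setU; simpl; intros x [->|H]; auto.
      + pose proof (fa_prob_subadd (fun x => f x = i) (fun x => In (f x) l')).
        specialize (Hnull i); lra. }
  assert (Htotal : mu (@setT T) <= mu (fun x => In (f x) l))
    by (apply fa_prob_mono; auto).
  destruct Hmu as [_ [H1 _]].
  specialize (Hcover l); lra.
Qed.

End FinitelyAdditiveProbability.

Arguments fa_prob_ge0 {T mu} Hmu A.
Arguments fa_prob_mono {T mu} Hmu A B.
Arguments fa_prob_fiber_pos {T mu} Hmu {I} f.

Section Restriction.

Variables (T U : Type) (e : U -> T).
Hypothesis e_inj : forall a b, e a = e b -> a = b.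

Definition image (B : U -> Prop) : T -> Prop := fun x => exists b, B b /\ x = e b.

Definition restrict (mu : (T -> Prop) -> R) (B : U -> Prop) : R :=
  mu (image B) / mu (image (@setT U)).

Lemma image_setU (A B : U -> Prop) : image (setU A B) = setU (image A) (image B).
Proof.
  apply set_ext; intro x; unfold image, setU; split.
  - intros [b [[Ha|Hb] ->]]; eauto.
  - intros [[b [Hb ->]]|[b [Hb ->]]]; eauto.
Qed.

Lemma image_disjoint (A B : U -> Prop) : disjoint A B -> disjoint (image A) (image B).
Proof.
  intros HAB x [[a [Ha ->]] [b [Hb Heq]]].
  apply e_inj in Heq; subst b; apply (HAB a); auto.
Qed.

Lemma fa_prob_restrict (mu : (T -> Prop) -> R) :
  fa_prob mu -> 0 < mu (image (@setT U)) -> fa_prob (restrict mu).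
Proof.
  intros Hmu Hpos; unfold restrict.
  split; [|split].
  - intro A.
    assert (Hle : mu (image A) <= mu (image (@setT U))).
    { apply (fa_prob_mono Hmu); intros x [b [_ ->]]; exists b; split; [exact I | reflexivity]. }
    pose proof (fa_prob_ge0 Hmu (image A)).
    split.
    + apply Rle_mult_inv_pos; lra.
    + apply Rmult_le_reg_r with (mu (image (@setT U))); [lra|].
      unfold Rdiv; rewrite Rmult_assoc, Rinv_l; lra.
  - field; lra.
  - intros A B HAB.
    rewrite image_setU, (proj2 (proj2 Hmu)) by (apply image_disjoint; auto).
    field; lra.
Qed.

Lemma restrict_ltrans_invariant (mu : (T -> Prop) -> R)
    (mulT : T -> T -> T) (mulU : U -> U -> U) (g : U) (A : U -> Prop) :
  (forall b, e (mulU g b) = mulT (e g) (e b)) ->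
  (forall a b, mulU g a = mulU g b -> a = b) ->
  (forall s B, acts_inj_left mulT s B -> mu (ltrans mulT s B) = mu B) ->
  restrict mu (ltrans mulU g A) = restrict mu A.
Proof.
  intros Hhom Hcancel Hinv; unfold restrict.
  replace (image (ltrans mulU g A)) with (ltrans mulT (e g) (image A)).
  - rewrite Hinv; [reflexivity|].
    intros x y [a [_ ->]] [b [_ ->]] Heq.
    rewrite <- !Hhom in Heq.
    f_equal; apply Hcancel, e_inj, Heq.
  - apply set_ext; intro x; unfold image, ltrans; split.
    + intros [y [[b [Hb ->]] ->]]; exists (mulU g b); rewrite Hhom; eauto.
    + intros [c [[b [Hb ->]] ->]]; exists (e b); rewrite Hhom; eauto.
Qed.

End Restriction.

Arguments image {T U} e B.
Arguments restrict {T U} e mu B.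

Lemma group_lcancel (G : Group) (g a b : G) : gmul G g a = gmul G g b -> a = b.
Proof.
  intro Heq.
  rewrite <- (gmul_1l G a), <- (gmul_1l G b), <- (gmul_Vl G g),
    <- !gmul_assoc, Heq; reflexivity.
Qed.

Section CliffordSemigroup.

Variables (Y : Semilattice) (S : StrongSemilattice Y) (y : Y).

Definition group_incl (a : grp S y) : ss_car S := existT _ y a.

Lemma group_incl_inj (a b : grp S y) : group_incl a = group_incl b -> a = b.
Proof. apply inj_pair2. Qed.

(* Since y /\ y = y and phi y y is the identity, S multiplies G_y as a group. *)
Lemma ss_mul_group_incl (a b : grp S y) :
  ss_mul (group_incl a) (group_incl b) = group_incl (gmul (grp S y) a b).
Proof.
  unfold ss_mul, group_incl; simpl.
  generalize (meet_idem Y y); generalize (meet Y y y); intros m ->.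
  rewrite !phi_id; reflexivity.
Qed.

Lemma image_group_incl : image group_incl (@setT _) = (fun s : ss_car S => projT1 s = y).
Proof.
  apply set_ext; intros [z b]; unfold image, group_incl, setT; simpl; split.
  - intros [b' [_ Heq]]; inversion Heq; reflexivity.
  - intros ->; exists b; auto.
Qed.

End CliffordSemigroup.

Arguments group_incl {Y} S y a.
Arguments group_incl_inj {Y S y} a b.
Arguments ss_mul_group_incl {Y S y} a b.
Arguments image_group_incl {Y} S y.

Theorem mainTheorem15 (Y : Semilattice) (HY : finite_type Y)
  (S : StrongSemilattice Y) (HS : left_fairly_amenable S) :
  exists y : Y, amenable (grp S y).
Proof.
  destruct HS as [mu [Hmu Hinv]].
  destruct (fa_prob_fiber_pos Hmu (@projT1 Y (fun y => grp S y)) HY) as [y Hpos].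
  exists y, (restrict (group_incl S y) mu).
  split.
  - apply fa_prob_restrict; [apply group_incl_inj | exact Hmu |].
    rewrite image_group_incl; exact Hpos.
  - intros g A.
    apply restrict_ltrans_invariant with (mulT := @ss_mul Y S).
    + apply group_incl_inj.
    + intro b; symmetry; apply ss_mul_group_incl.
    + apply group_lcancel.
    + exact Hinv.
Qed.
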